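(* Let $q=p^n$ with $p$ prime, let $d+1$ be a divisor of $q-1$, and let $f:\mathbb{F}_q\to\mathbb{F}_q$ be a $(d+1)$-divisible Dembowski–Ostrom polynomial which is almost-$(d+1)$-to-1. Then: (a) $f$ is zero-difference $d$-balanced; (b) $f$ is differentially $d$-uniform and all its differential sets $D_a(f)=\{f(x+a)-f(x):x\in\mathbb{F}_q\}$, $a\neq 0$, are $\mathbb{F}_p$-linear subspaces of $\mathbb{F}_q$; (c) $d=p^i$ for some integer $i\geq 0$.
   Context: A polynomial $f\in\mathbb{F}_q[x]$, $q=p^n$, is Dembowski–Ostrom (DO) if it can be written as $\sum_{i,j=0}^{n-1}a_{ij}x^{p^i+p^j}$ when $q$ is odd, and as $\sum_{i\neq j}a_{ij}x^{2^i+2^j}$ when $q$ is even. For a divisor $k$ of $q-1$, $f$ is $k$-divisible if $f(x)=f'(x^k)$ for some map $f'$ (equivalently $f(x)=f(\omega x)$ for all $x$ and all $\omega$ with $\omega^k=1$). $f$ is almost-$k$-to-1 if there is a unique element of $\mathrm{Im}(f)$ with exactly one preimage and every other element of $\mathrm{Im}(f)$ has exactly $k$ preimages. $f$ is differentially $d$-uniform if $d=\max_{a\neq 0,\,b}|\{x: f(x+a)-f(x)=b\}|$. $f$ is zero-difference $d$-balanced if for every nonzero $a$ the equation $f(x+a)-f(x)=0$ has exactly $d$ solutions. *)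

From HB Require Import structures.
From mathcomp Require Import all_boot all_order all_algebra all_field.
Set Implicit Arguments. Unset Strict Implicit. Unset Printing Implicit Defensive.
Import GRing.Theory.
Local Open Scope ring_scope.

Section Defs.
Variable F : finFieldType.

Definition is_DO (p n : nat) (f : F -> F) : Prop :=
  exists a : 'I_n -> 'I_n -> F, forall x : F,
    f x = \sum_(i < n) \sum_(j < n | (p != 2%N) || (i != j))
            a i j * x ^+ (p ^ i + p ^ j)%N.

Definition k_divisible (k : nat) (f : F -> F) : Prop :=
  exists f' : F -> F, forall x : F, f x = f' (x ^+ k).

Definition npreim (f : F -> F) (y : F) : nat := #|[set x | f x == y]|.

Definition almost_k_to_1 (k : nat) (f : F -> F) : Prop :=
  exists y0 : F, [/\ y0 \in codom f, npreim f y0 = 1%N,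
    (forall y, y \in codom f -> npreim f y = 1%N -> y = y0) &
    (forall y, y \in codom f -> y != y0 -> npreim f y = k)].

Definition ndiff (f : F -> F) (a b : F) : nat :=
  #|[set x | f (x + a) - f x == b]|.

Definition diff_uniform (f : F -> F) (d : nat) : Prop :=
  d = \max_(a : F | a != 0) \max_(b : F) ndiff f a b.

Definition zero_diff_balanced (f : F -> F) (d : nat) : Prop :=
  forall a : F, a != 0 -> ndiff f a 0 = d.

Definition diff_set (f : F -> F) (a : F) : {set F} :=
  [set f (x + a) - f x | x : F].

(* F_p-linear subspace of F (the prime field being {k%:R}). *)
Definition Fp_subspace (S : {set F}) : Prop :=
  [/\ 0 \in S, (forall x y, x \in S -> y \in S -> x + y \in S) &
      (forall (k : nat) x, x \in S -> k%:R * x \in S)].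

End Defs.

From HB Require Import structures.
From mathcomp Require Import all_boot all_order all_algebra all_field.
From mathcomp Require Import all_fingroup all_solvable.
From mathcomp Require Import ring.
Import GRing.Theory.
Local Open Scope ring_scope.
Set Implicit Arguments. Unset Strict Implicit.

(* The proof combines two independent facts.
   1. A DO polynomial is "quadratic": each derivative D_a f(x) = f(x+a) - f(x)
      is an affine map, i.e. D_a f(x+y) + D_a f(0) = D_a f(x) + D_a f(y).
      Indeed each monomial x^(p^i+p^j) is a product of two additive
      Frobenius powers.  On a finite abelian group, the nonempty fibers of an
      affine map are translates of its kernel (an additive subgroup), so the
      kernel size bounds every fiber and divides the group order, and when
      the map has a zero its image is closed under addition.
   2. Divisibility makes f constant on the cosets w*x, w^(d+1) = 1; there are
      exactly d+1 such w, and almost-(d+1)-to-1 forces the fiber of f(x),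
      x <> 0, to be exactly this coset.  Hence f(x+a) = f(x) iff
      x = a/(w-1) with w <> 1 a (d+1)-th root of unity: d solutions.
   Taking h = D_a f in (1), its zero fiber has size d by (2), which yields
   all three claims (d divides q = p^n, so d is a power of p). *)

(* h is affine: h - h 0 is additive. *)
Definition affine_map (V W : zmodType) (h : V -> W) : Prop :=
  forall x y, h (x + y) + h 0 = h x + h y.

Definition diff_map (V W : zmodType) (g : V -> W) (a : V) : V -> W :=
  fun x => g (x + a) - g x.

Definition quadratic (V W : zmodType) (g : V -> W) : Prop :=
  forall a, affine_map (diff_map g a).

Section QuadraticMaps.
Variables V W : zmodType.

Lemma quadratic_eq (g h : V -> W) : g =1 h -> quadratic g -> quadratic h.
Proof. by move=> eq_gh Qg a x y; rewrite /diff_map -!eq_gh; apply: Qg. Qed.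

Lemma quadratic_sum (I : Type) (r : seq I) (P : pred I) (G : I -> V -> W) :
  (forall i, quadratic (G i)) -> quadratic (fun z => \sum_(i <- r | P i) G i z).
Proof.
move=> QG a x y; rewrite /diff_map -!sumrB -!big_split /=.
by apply: eq_bigr => i _; apply: QG.
Qed.

End QuadraticMaps.

Lemma quadratic_bilinear (R : comPzRingType) (u v : R -> R) (c : R) :
  {morph u : x y / x + y} -> {morph v : x y / x + y} ->
  quadratic (fun z => c * (u z * v z)).
Proof.
move=> uD vD a x y.
have u0 : u 0 = 0 by apply: (addrI (u 0)); rewrite -uD !addr0.
have v0 : v 0 = 0 by apply: (addrI (v 0)); rewrite -vD !addr0.
rewrite /diff_map !uD !vD u0 v0; ring.
Qed.

Lemma quadratic_DO (F : finFieldType) (p n : nat) (f : F -> F) :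
  p \in [pchar F] -> is_DO p n f -> quadratic f.
Proof.
move=> pcharF [c f_eq]; apply: quadratic_eq (fun x => esym (f_eq x)) _.
apply: quadratic_sum => i; apply: quadratic_sum => j.
apply: (@quadratic_eq _ _ (fun z => c i j * (z ^+ (p ^ i) * z ^+ (p ^ j)))).
  by move=> z; rewrite exprD.
have frobD k : {morph (fun z : F => z ^+ (p ^ k)) : x y / x + y}.
  by move=> x y; apply: exprDn_pchar; rewrite pnatX (pnatE _ (pcharf_prime pcharF)) pcharF.
exact: quadratic_bilinear.
Qed.

Section AffineMaps.
Variables V W : finZmodType.
Variable h : V -> W.
Hypothesis h_affine : affine_map h.

Let kernel := [set x | h x == h 0].

Lemma affine_sub x y : h (x - y) = h x + h 0 - h y.
Proof. by apply: (addIr (h y)); rewrite -h_affine subrK subrK. Qed.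

(* Every nonempty fiber of an affine map is a translate of its kernel. *)
Lemma affine_fiber_card b x1 : h x1 = b -> #|[set x | h x == b]| = #|kernel|.
Proof.
move=> hx1; rewrite -(card_imset kernel (addIr x1)); apply: eq_card => x.
rewrite inE; apply/eqP/imsetP => [hx|[y]].
  exists (x - x1); last by rewrite subrK.
  by rewrite inE affine_sub hx hx1 addrAC subrr add0r.
rewrite inE => /eqP hy ->; apply: (addIr (h 0)).
by rewrite h_affine hy hx1 addrC.
Qed.

Lemma affine_fiber_le b : (#|[set x | h x == b]| <= #|kernel|)%N.
Proof.
have [->|[x1]] := set_0Vmem [set x | h x == b]; first by rewrite cards0.
by rewrite inE => /eqP /affine_fiber_card ->.
Qed.

(* The kernel is an additive subgroup, so Lagrange applies. *)
Lemma affine_kernel_dvd : (#|kernel| %| #|V|)%N.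
Proof.
have kernel_group : group_set kernel.
  apply/group_setP; split=> [|x y]; first by rewrite inE.
  rewrite !inE FinRing.zmodMgE => /eqP hx /eqP hy; apply/eqP; apply: (addIr (h 0)).
  by rewrite h_affine hx hy.
by rewrite -cardsT (cardSg (subsetT (Group kernel_group))).
Qed.

Variable x0 : V.
Hypothesis hx0 : h x0 = 0.

Lemma affine_zero_fiber_card : #|[set x | h x == 0]| = #|kernel|.
Proof. exact: affine_fiber_card hx0. Qed.

Lemma affine_imageD u v : u \in [set h x | x : V] -> v \in [set h x | x : V] ->
  u + v \in [set h x | x : V].
Proof.
case/imsetP=> [x _ ->] /imsetP [y _ ->]; apply/imsetP; exists (x + y - x0) => //.
by rewrite affine_sub hx0 subr0 h_affine.
Qed.

Lemma affine_max_fiber :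
  \max_(b : W) #|[set x | h x == b]| = #|[set x | h x == 0]|.
Proof.
apply/eqP; rewrite eqn_leq leq_bigmax andbT.
by apply/bigmax_leqP => b _; rewrite affine_zero_fiber_card affine_fiber_le.
Qed.

End AffineMaps.

Lemma Fp_subspaceP (F : finFieldType) (S : {set F}) :
  0 \in S -> (forall x y, x \in S -> y \in S -> x + y \in S) -> Fp_subspace S.
Proof.
move=> S0 SD; split=> // k x Sx; rewrite mulr_natl.
by elim: k => [|k IHk]; rewrite ?mulr0n // mulrS SD.
Qed.

Definition roots_of_unity (F : finFieldType) (k : nat) : {set F} :=
  [set w : F | w ^+ k == 1].

(* There are exactly k of them when k divides q-1: at most k as roots of
   X^k - 1, and at least k in the cyclic group of units. *)
Lemma card_roots_of_unity (F : finFieldType) (k : nat) :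
  (k %| #|F|.-1)%N -> #|roots_of_unity F k| = k.
Proof.
move=> k_dvd; have k_gt0 : (0 < k)%N.
  move: k_dvd; rewrite lt0n; apply: contraTneq => ->.
  by rewrite dvd0n -lt0n -subn1 subn_gt0 card_finNzRing_gt1.
apply/eqP; rewrite eqn_leq; apply/andP; split.
  rewrite cardE; apply: max_unity_roots; rewrite ?enum_uniq //.
  by apply/allP => w; rewrite mem_enum inE unity_rootE.
have [u gen_u] := cyclicP (field_unit_group_cyclic [set: {unit F}]%G).
have [m k_m] : exists m, #|F|.-1 = (m * k)%N by exists (#|F|.-1 %/ k)%N; rewrite divnK.
have order_u : #[u]%g = (m * k)%N by rewrite /order -gen_u card_finField_unit.
have order_um : #[u ^+ m]%g = k.
  rewrite orderXdiv order_u ?dvdn_mulr // mulKn //.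
  by move: (order_gt0 u); rewrite order_u muln_gt0 => /andP[].
rewrite -[in X in (X <= _)%N]order_um /order -(card_imset _ val_inj).
apply: subset_leq_card; apply/subsetP => _ /imsetP [w w_in ->].
by rewrite inE -FinRing.val_unitX -order_um /order (expg_cardG w_in).
Qed.

(* No map on a field is almost-1-to-1: all its values would have a single
   preimage, so it would take only one value. *)
Lemma not_almost_1_to_1 (F : finFieldType) (g : F -> F) : ~ almost_k_to_1 1 g.
Proof.
case=> y0 [_ y0_one y0_unique one_else].
have g_const x : g x = y0.
  apply: y0_unique (codom_f g x) _.
  by have [->|ne] := eqVneq (g x) y0; [exact: y0_one | exact: one_else (codom_f g x) ne].
have := card_finNzRing_gt1 F; rewrite -cardsT.
suff -> : [set: F] = [set x | g x == y0] by rewrite -/(npreim g y0) y0_one.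
by apply/setP => x; rewrite !inE g_const eqxx.
Qed.

Section DivisibleAlmostMaps.
Variables (F : finFieldType) (d : nat) (f : F -> F).
Hypothesis dvd_q1 : (d.+1 %| #|F|.-1)%N.
Hypothesis f_div : k_divisible d.+1 f.
Hypothesis f_almost : almost_k_to_1 d.+1 f.

Let R := roots_of_unity F d.+1.

Lemma divisible_rootsE w x : w \in R -> f (w * x) = f x.
Proof.
case: f_div => f' f_eq; rewrite inE => /eqP w_root.
by rewrite !f_eq exprMn w_root mul1r.
Qed.

Lemma almost_d_neq0 : d != 0%N.
Proof. by apply/eqP => d0; move: f_almost; rewrite d0; apply: not_almost_1_to_1. Qed.

(* The fiber of f through x <> 0 is the coset of x under the roots of unity:
   it contains that coset (d+1 >= 2 elements), so f x is not the exceptional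
   value and the fiber has exactly d+1 elements. *)
Lemma fiber_nonzero x : x != 0 -> [set z | f z == f x] = [set w * x | w in R].
Proof.
move=> x_neq0.
have orbit_sub : [set w * x | w in R] \subset [set z | f z == f x].
  by apply/subsetP => _ /imsetP[w wR ->]; rewrite inE divisible_rootsE.
have card_orbit : #|[set w * x | w in R]| = d.+1.
  by rewrite card_imset ?card_roots_of_unity //; apply: mulIf.
have npreim_fx : npreim f (f x) = d.+1.
  case: f_almost => y0 [_ y0_one _ k_else]; apply: k_else (codom_f f x) _.
  apply: contraTneq (subset_leq_card orbit_sub) => ->.
  by rewrite -/(npreim f y0) y0_one card_orbit -ltnNge ltnS lt0n almost_d_neq0.
by apply/esym/eqP; rewrite eqEcard orbit_sub card_orbit -npreim_fx /=.
Qed.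

Lemma f_neq_f0 x : x != 0 -> f x != f 0.
Proof.
move=> x_neq0; have : 0 \notin [set z | f z == f x].
  rewrite fiber_nonzero //; apply/imsetP => -[w wR /esym/eqP].
  rewrite mulf_eq0 (negbTE x_neq0) orbF => /eqP w0.
  by move: wR; rewrite inE w0 expr0n eq_sym oner_eq0.
by rewrite inE eq_sym.
Qed.

Lemma zero_diff_setE a : a != 0 ->
  [set x | f (x + a) - f x == 0] = [set a / (w - 1) | w in R :\ 1].
Proof.
move=> a_neq0; apply/setP => x; rewrite inE subr_eq0.
apply/eqP/imsetP => [fxa|[w]].
  have x_neq0 : x != 0.
    apply: contraTneq (f_neq_f0 a_neq0) => x0.
    by move: fxa; rewrite x0 add0r => ->; rewrite eqxx.
  have : x + a \in [set z | f z == f x] by rewrite inE fxa.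
  rewrite fiber_nonzero // => /imsetP [w wR xa_eq].
  have a_eq : a = (w - 1) * x by rewrite mulrBl mul1r -xa_eq addrAC subrr add0r.
  have w_neq1 : w != 1 by apply: contraNneq a_neq0 => w1; rewrite a_eq w1 subrr mul0r.
  exists w; first by rewrite in_setD1 w_neq1 wR.
  by rewrite a_eq mulrAC divff ?mul1r // subr_eq0.
rewrite in_setD1 => /andP[w_neq1 wR] ->.
have w1_neq0 : w - 1 != 0 by rewrite subr_eq0.
have -> : a / (w - 1) + a = w * (a / (w - 1)) by field.
exact: divisible_rootsE.
Qed.

Lemma card_zero_diff_set a : a != 0 -> #|[set x | f (x + a) - f x == 0]| = d.
Proof.
move=> a_neq0; rewrite zero_diff_setE // card_in_imset.
  have := cardsD1 1 R; rewrite card_roots_of_unity // inE expr1n eqxx add1n.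
  by case.
move=> w1 w2; rewrite !in_setD1 => /andP[w1_neq1 _] /andP[w2_neq1 _] /(mulfI a_neq0).
by move/invr_inj/addIr.
Qed.

End DivisibleAlmostMaps.

Section DerivativesOfDivisibleDO.
Variables (F : finFieldType) (p n d : nat) (f : F -> F).
Hypothesis pcharF : p \in [pchar F].
Hypothesis f_DO : is_DO p n f.
Hypothesis dvd_q1 : (d.+1 %| #|F|.-1)%N.
Hypothesis f_div : k_divisible d.+1 f.
Hypothesis f_almost : almost_k_to_1 d.+1 f.

Lemma diff_map_affine a : affine_map (diff_map f a).
Proof. exact: quadratic_DO pcharF f_DO a. Qed.

Lemma diff_map_has_zero a : a != 0 -> exists x0, diff_map f a x0 = 0.
Proof.
move=> a_neq0; have := card_zero_diff_set dvd_q1 f_div f_almost a_neq0.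
have [-> d0|[x0]] := set_0Vmem [set x | f (x + a) - f x == 0].
  by move: (almost_d_neq0 f_almost); rewrite -d0 cards0.
by rewrite inE => /eqP x0_zero _; exists x0.
Qed.

Lemma diff_kernel_card a : a != 0 ->
  #|[set x | diff_map f a x == diff_map f a 0]| = d.
Proof.
move=> a_neq0; have [x0 x0_zero] := diff_map_has_zero a_neq0.
rewrite -(affine_zero_fiber_card (diff_map_affine a) x0_zero).
exact: card_zero_diff_set.
Qed.

Lemma max_ndiff a : a != 0 -> \max_(b : F) ndiff f a b = d.
Proof.
move=> a_neq0; have [x0 x0_zero] := diff_map_has_zero a_neq0.
rewrite (affine_max_fiber (diff_map_affine a) x0_zero).
exact: card_zero_diff_set.
Qed.

Lemma diff_set_subspace a : a != 0 -> Fp_subspace (diff_set f a).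
Proof.
move=> a_neq0; have [x0 x0_zero] := diff_map_has_zero a_neq0.
apply: Fp_subspaceP => [|u v]; first by apply/imsetP; exists x0.
exact: (affine_imageD (diff_map_affine a) x0_zero).
Qed.

End DerivativesOfDivisibleDO.

Theorem lemma3p1 (F : finFieldType) (p n d : nat) (f : F -> F) :
  prime p -> p \in [pchar F] -> #|F| = (p ^ n)%N ->
  ((d.+1) %| #|F|.-1)%N ->
  is_DO p n f -> k_divisible d.+1 f -> almost_k_to_1 d.+1 f ->
  [/\ zero_diff_balanced f d,
      diff_uniform f d /\ (forall a : F, a != 0 -> Fp_subspace (diff_set f a))
    & exists i : nat, d = (p ^ i)%N].
Proof.
move=> p_prime pcharF cardF dvd_q1 f_DO f_div f_almost.
have max_d := max_ndiff pcharF f_DO dvd_q1 f_div f_almost.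
have one_neq0 := oner_neq0 F.
split; [|split|].
- by move=> a; apply: card_zero_diff_set.
- apply/eqP; rewrite eqn_leq -{1}(max_d 1 one_neq0) leq_bigmax_cond //=.
  by apply/bigmax_leqP => a a_neq0; rewrite max_d.
- exact: diff_set_subspace pcharF f_DO dvd_q1 f_div f_almost.
- have := affine_kernel_dvd (diff_map_affine pcharF f_DO 1).
  rewrite (diff_kernel_card pcharF f_DO dvd_q1 f_div f_almost one_neq0) cardF.
  by case/(dvdn_pfactor _ _ p_prime) => i _ ->; exists i.
Qed.
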